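(* Let $\mathbb{F}$ be a field, let $n\ge 1$, and let $G$ be a finite subgroup of $\mathrm{M}(n,\mathbb{F})$ whose permutation part $\phi(G)$ is a transitive subgroup of $\mathrm{Sym}(n)$. Then $G$ is $\mathrm{M}(n,\mathbb{F})$-conjugate to a subgroup of $\widetilde{\mathrm{M}}(n,\mathbb{F})$.
   Context: $\mathrm{M}(n,\mathbb{F})$ denotes the group of monomial matrices in $\mathrm{GL}(n,\mathbb{F})$; it splits as $\mathrm{D}(n,\mathbb{F})\rtimes \mathrm{P}(n)$, where $\mathrm{D}(n,\mathbb{F})$ is the group of invertible diagonal matrices and $\mathrm{P}(n)$ the group of permutation matrices, identified with $\mathrm{Sym}(n)$ via $\alpha\mapsto[\delta_{i\alpha,j}]_{i,j}$. The map $\phi\colon \mathrm{M}(n,\mathbb{F})\to\mathrm{Sym}(n)$ is $dt\mapsto t$ for $d\in\mathrm{D}(n,\mathbb{F})$, $t\in \mathrm{P}(n)$; $\phi(G)$ is called the permutation part of $G$. $\widetilde{\mathrm{M}}(n,\mathbb{F})$ denotes the group of all $n\times n$ monomial matrices whose non-zero entries are roots of unity in $\mathbb{F}$. *)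

From HB Require Import structures.
From mathcomp Require Import all_boot all_order all_algebra.
Set Implicit Arguments. Unset Strict Implicit. Unset Printing Implicit Defensive.
Import GRing.Theory.
Local Open Scope ring_scope.

(* Monomial matrices M(n,F): exactly one nonzero entry in each row and each column
   (such matrices are automatically invertible). *)
Definition monomial_mx (F : fieldType) (n : nat) (A : 'M[F]_n) : Prop :=
  (forall i : 'I_n, exists! j : 'I_n, A i j != 0) /\
  (forall j : 'I_n, exists! i : 'I_n, A i j != 0).

Definition root_of_unity (F : fieldType) (x : F) : Prop :=
  exists k : nat, (0 < k)%N /\ x ^+ k = 1.

Definition rootunit_monomial_mx (F : fieldType) (n : nat) (A : 'M[F]_n) : Prop :=
  monomial_mx A /\ (forall i j, A i j != 0 -> root_of_unity (A i j)).

(* Permutation part phi(A) of a monomial matrix A = d t, t = [delta_{i alpha, j}]: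
   phi(A) sends i to the unique j with A i j != 0. *)
Definition perm_part (F : fieldType) (n : nat) (A : 'M[F]_n) (i : 'I_n) : 'I_n :=
  odflt i [pick j | A i j != 0].

(* A finite subgroup of M(n,F), given by the finite list of its elements. *)
Definition finite_monomial_subgroup (F : fieldType) (n : nat) (G : seq 'M[F]_n) : Prop :=
  [/\ 1%:M \in G,
      (forall A, A \in G -> monomial_mx A),
      (forall A B, A \in G -> B \in G -> A *m B \in G) &
      (forall A, A \in G -> invmx A \in G)].

Definition transitive_perm_part (F : fieldType) (n : nat) (G : seq 'M[F]_n) : Prop :=
  forall i j : 'I_n, exists2 A, A \in G & perm_part A i = j.

(* Fix a point i0.  By transitivity, for every j some B_j in G sends i0 to j;
   conjugating by the diagonal matrix with entries b_j = (B_j)_{i0 j} rescales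
   the (i,j) entry of A in G to b_i A_ij / b_j.  If E in G sends j back to i0,
   this is the quotient of the (i0,i0) entries of B_i A E and B_j E, two
   elements of G fixing i0.  Such an entry is a root of unity, because its
   powers are again (i0,i0) entries of elements of the finite group G; only
   finiteness and closure under products are used. *)

From Pilot Require Import Defs.
From mathcomp Require Import all_boot all_order all_algebra.
From mathcomp Require Import ring.
Set Implicit Arguments. Unset Strict Implicit. Unset Printing Implicit Defensive.
Import GRing.Theory.
Local Open Scope ring_scope.

Section RootsOfUnity.
Variable F : fieldType.

Lemma root_of_unity_div (u v : F) :
  Defs.root_of_unity u -> Defs.root_of_unity v -> Defs.root_of_unity (u / v).
Proof.
move=> [k [k_gt0 uk]] [m [m_gt0 vm]]; exists (k * m)%N.
split; first by rewrite muln_gt0 k_gt0.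
by rewrite expr_div_n exprM uk expr1n mulnC exprM vm expr1n divr1.
Qed.

Lemma root_of_unity_finite_powers (x : F) (s : seq F) :
  x != 0 -> (forall k, x ^+ k.+1 \in s) -> Defs.root_of_unity x.
Proof.
move=> x_neq0 xs; set t := [seq x ^+ k.+1 | k <- iota 0 (size s).+1].
have : ~~ uniq t.
  have t_sub_s : {subset t <= s} by move=> _ /mapP[k _ ->].
  apply/negP => /uniq_leq_size/(_ t_sub_s).
  by rewrite size_map size_iota ltnn.
case/(uniqPn 0) => a [b [lt_ab b_lt eq_ab]]; rewrite size_map size_iota in b_lt.
have a_lt := ltn_trans lt_ab b_lt.
rewrite !(nth_map 0%N) ?size_iota // !nth_iota // !add0n in eq_ab.
exists (b - a)%N; split; first by rewrite subn_gt0.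
by rewrite -subSS expfB ?ltnS // -eq_ab divff // expf_neq0.
Qed.

End RootsOfUnity.

Section MonomialMatrices.
Variables (F : fieldType) (n : nat).
Implicit Types (A B : 'M[F]_n) (d : 'rV[F]_n).

Lemma mul_monomial_mx A B i j k :
  monomial_mx A -> A i j != 0 -> (A *m B) i k = A i j * B j k.
Proof.
move=> [A_row _] Aij_neq0; rewrite !mxE (bigD1 j) //= big1 ?addr0 // => l l_neq_j.
have [x [_ x_uniq]] := A_row i.
have [->|Ail_neq0] := eqVneq (A i l) 0; first by rewrite mul0r.
by rewrite -(x_uniq _ Ail_neq0) (x_uniq _ Aij_neq0) eqxx in l_neq_j.
Qed.

Lemma perm_part_neq0 A i : monomial_mx A -> A i (perm_part A i) != 0.
Proof.
move=> [A_row _]; rewrite /perm_part; case: pickP => [//|A_i0 /=].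
by have [x [+ _]] := A_row i; rewrite A_i0.
Qed.

Lemma monomial_mx_eq_support A B :
  monomial_mx A -> (forall i j, (B i j != 0) = (A i j != 0)) -> monomial_mx B.
Proof.
move=> [A_row A_col] eqAB; split=> [i|j].
  have [x [Aix x_uniq]] := A_row i; exists x.
  by split=> [|y]; rewrite eqAB //; apply: x_uniq.
have [x [Axj x_uniq]] := A_col j; exists x.
by split=> [|y]; rewrite eqAB //; apply: x_uniq.
Qed.

Lemma monomial_diag_mx d : (forall i, d 0 i != 0) -> monomial_mx (diag_mx d).
Proof.
move=> d_neq0; split=> i; exists i; split=> [|j]; rewrite mxE ?eqxx ?mulr1n //.
  by have [|_] := eqVneq i j; rewrite ?mulr0n ?eqxx.
by have [|_] := eqVneq j i; rewrite ?mulr0n ?eqxx.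
Qed.

Lemma invmx_diag_mxV d :
  (forall i, d 0 i != 0) -> invmx (diag_mx (\row_i (d 0 i)^-1)) = diag_mx d.
Proof.
move=> d_neq0; have dV : diag_mx d *m diag_mx (\row_i (d 0 i)^-1) = 1%:M.
  rewrite mul_diag_mx; apply/matrixP => i j; rewrite !mxE.
  by have [->|_] := eqVneq i j; rewrite ?mulr1n ?divff ?mulr0n ?mulr0.
have [_ unit_dV] := mulmx1_unit dV.
by rewrite -[LHS]mul1mx -dV -mulmxA mulmxV // mulmx1.
Qed.

Lemma diag_conj_mxE d A i j :
  (diag_mx d *m A *m diag_mx (\row_k (d 0 k)^-1)) i j = d 0 i * A i j / d 0 j.
Proof. by rewrite mul_mx_diag mul_diag_mx !mxE. Qed.

End MonomialMatrices.

Section MonomialSemigroup.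
Variables (F : fieldType) (n : nat) (G : seq 'M[F]_n).
Hypothesis G_monomial : forall A, A \in G -> monomial_mx A.
Hypothesis G_mulmx_closed : forall A B, A \in G -> B \in G -> A *m B \in G.

Lemma fixed_entry_root_of_unity C i :
  C \in G -> C i i != 0 -> Defs.root_of_unity (C i i).
Proof.
move=> CG Cii_neq0; pose s := [seq M i i | M : 'M[F]_n <- G].
apply: (root_of_unity_finite_powers (s := s) Cii_neq0) => k.
have [X XG <-] : exists2 X, X \in G & X i i = C i i ^+ k.+1.
  elim: k => [|k [X XG Xii]]; first by exists C; rewrite ?expr1.
  exists (C *m X); first exact: G_mulmx_closed.
  by rewrite (mul_monomial_mx _ _ (G_monomial CG) Cii_neq0) Xii -exprS.
exact: map_f.
Qed.

Lemma scaled_entry_root_of_unity A B B' E i j k :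
  A \in G -> B \in G -> B' \in G -> E \in G ->
  B k i != 0 -> A i j != 0 -> B' k j != 0 -> E j k != 0 ->
  Defs.root_of_unity (B k i * A i j / B' k j).
Proof.
move=> AG BG B'G EG Bki_neq0 Aij_neq0 B'kj_neq0 Ejk_neq0.
have BAE_kk : (B *m (A *m E)) k k = B k i * (A i j * E j k).
  rewrite (mul_monomial_mx _ _ (G_monomial BG) Bki_neq0).
  by rewrite (mul_monomial_mx _ _ (G_monomial AG) Aij_neq0).
have B'E_kk : (B' *m E) k k = B' k j * E j k.
  by rewrite (mul_monomial_mx _ _ (G_monomial B'G) B'kj_neq0).
have BAE_root : Defs.root_of_unity ((B *m (A *m E)) k k).
  apply: fixed_entry_root_of_unity; first by rewrite G_mulmx_closed ?G_mulmx_closed.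
  by rewrite BAE_kk !mulf_neq0.
have B'E_root : Defs.root_of_unity ((B' *m E) k k).
  apply: fixed_entry_root_of_unity; first exact: G_mulmx_closed.
  by rewrite B'E_kk mulf_neq0.
have := root_of_unity_div BAE_root B'E_root; rewrite BAE_kk B'E_kk.
by congr Defs.root_of_unity; field; rewrite B'kj_neq0 Ejk_neq0.
Qed.

Lemma transitive_entry_witness :
  transitive_perm_part G -> forall i j, {A | A \in G & A i j != 0}.
Proof.
move=> G_trans i j; have ex : exists A, (A \in G) && (A i j != 0).
  have [A AG <-] := G_trans i j; exists A.
  by rewrite AG perm_part_neq0 //; apply: G_monomial.
by have /andP[] := xchooseP ex; exists (xchoose ex).
Qed.

End MonomialSemigroup.

Theorem lemma2p4 (F : fieldType) (n : nat) (G : seq 'M[F]_n) :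
  (0 < n)%N ->
  finite_monomial_subgroup G ->
  transitive_perm_part G ->
  exists P : 'M[F]_n,
    monomial_mx P /\
    (forall A, A \in G -> rootunit_monomial_mx (invmx P *m A *m P)).
Proof.
move=> n_gt0 [_ G_monomial G_mulmx_closed _] G_trans.
have witness := transitive_entry_witness G_monomial G_trans.
pose i0 := Ordinal n_gt0.
have [B BG B_neq0] : {B : 'I_n -> 'M_n | forall j, B j \in G & forall j, B j i0 j != 0}.
  by exists (fun j => s2val (witness i0 j)) => j; case: witness.
have [E EG E_neq0] : {E : 'I_n -> 'M_n | forall j, E j \in G & forall j, E j j i0 != 0}.
  by exists (fun j => s2val (witness j i0)) => j; case: witness.
pose d := \row_j B j i0 j.
have d_neq0 j : d 0 j != 0 by rewrite mxE.
exists (diag_mx (\row_j (d 0 j)^-1)); split.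
  by apply: monomial_diag_mx => j; rewrite mxE invr_eq0.
move=> A AG; rewrite invmx_diag_mxV //.
have conj_neq0 i j :
    ((diag_mx d *m A *m diag_mx (\row_k (d 0 k)^-1)) i j != 0) = (A i j != 0).
  by rewrite diag_conj_mxE !mulf_eq0 invr_eq0 !negb_or !d_neq0 andbT.
split=> [|i j]; first exact: monomial_mx_eq_support (G_monomial _ AG) conj_neq0.
rewrite conj_neq0 diag_conj_mxE !mxE => Aij_neq0.
exact: (scaled_entry_root_of_unity G_monomial G_mulmx_closed AG (BG i) (BG j) (EG j)
  (B_neq0 i) Aij_neq0 (B_neq0 j) (E_neq0 j)).
Qed.
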